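(* Let $A$ be a commutative subalgebra of a $K$-algebra $E$, let $A'$ be a non-empty subset of $A$, let $\Delta=\{\mathrm{ad}_a\mid a\in A'\}$, let $\mathfrak{a}$ be a nonzero ideal of $N_\Delta(E)$ and $\mathfrak{a}_0=\mathfrak{a}\cap N_\Delta(E)_0=\mathfrak{a}\cap E^\Delta$. Then: (1) $\mathfrak{a}_0$ is a nonzero ideal of the algebra $N_\Delta(E)_0=E^\Delta=C_E(A')$, and $\mathfrak{a}'=N_\Delta(E)\mathfrak{a}_0N_\Delta(E)$ is a nonzero ideal of $N_\Delta(E)$ with $\mathfrak{a}'\cap N_\Delta(E)_0=\mathfrak{a}_0$. (2) If, in addition, $N_\Delta(E)_0$ is commutative, then $[N_\Delta(E)_1,\mathfrak{a}_0]\subseteq\mathfrak{a}_0$.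
   Context: $\mathrm{ad}_a(f)=[a,f]=af-fa$. For $i\geq 1$, $\Delta^i=\{\delta_1\cdots\delta_i\mid\delta_j\in\Delta\}$; $N_\Delta(E)_i=\{e\in E\mid\Delta^{i+1}e=0\}$ for $i\geq0$, $N_\Delta(E)=\bigcup_{i\ge0}N_\Delta(E)_i$, $E^\Delta=\bigcap_{\delta\in\Delta}\ker\delta$. $C_E(A')=\{e\in E\mid ea=ae \text{ for all } a\in A'\}$. *)

From HB Require Import structures.
From mathcomp Require Import all_boot all_order all_algebra.
Set Implicit Arguments. Unset Strict Implicit. Unset Printing Implicit Defensive.
Import GRing.Theory.
Local Open Scope ring_scope.

Definition ad (K : fieldType) (E : algType K) (a f : E) : E := a * f - f * a.

Definition iter_ad (K : fieldType) (E : algType K) (s : seq E) (e : E) : E :=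
  foldr (@ad K E) e s.

(* N_Delta(E)_i = { e | Delta^{i+1} e = 0 }, Delta = { ad_a | a in A' } *)
Definition NDelta_i (K : fieldType) (E : algType K) (A' : E -> Prop) (i : nat)
  (e : E) : Prop :=
  forall s : seq E, size s = i.+1 -> (forall a, a \in s -> A' a) ->
    iter_ad s e = 0.

Definition NDelta (K : fieldType) (E : algType K) (A' : E -> Prop) (e : E) : Prop :=
  exists i, NDelta_i A' i e.

Definition fixed_Delta (K : fieldType) (E : algType K) (A' : E -> Prop) (e : E) : Prop :=
  forall a, A' a -> ad a e = 0.

Definition centralizer (K : fieldType) (E : algType K) (A' : E -> Prop) (e : E) : Prop :=
  forall a, A' a -> e * a = a * e.

Definition is_subalgebra (K : fieldType) (E : algType K) (A : E -> Prop) : Prop :=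
  [/\ A 0, A 1, (forall x y, A x -> A y -> A (x + y)),
      (forall (c : K) x, A x -> A (c *: x)) & (forall x y, A x -> A y -> A (x * y))].

Definition is_commutative_on (K : fieldType) (E : algType K) (S : E -> Prop) : Prop :=
  forall x y, S x -> S y -> x * y = y * x.

Definition is_ideal_of (K : fieldType) (E : algType K) (S I : E -> Prop) : Prop :=
  [/\ (forall x, I x -> S x), I 0, (forall x y, I x -> I y -> I (x + y)),
      (forall (c : K) x, I x -> I (c *: x)) &
      ((forall s x, S s -> I x -> I (s * x)) /\ (forall s x, S s -> I x -> I (x * s)))].

Definition nonzero_set (K : fieldType) (E : algType K) (S : E -> Prop) : Prop :=
  exists x, S x /\ x <> 0.

Definition set_inter (K : fieldType) (E : algType K) (S T : E -> Prop) (e : E) : Prop :=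
  S e /\ T e.

Definition prod_set3 (K : fieldType) (E : algType K) (S T U : E -> Prop) (e : E) : Prop :=
  exists l : seq (E * E * E),
    (forall p, p \in l -> [/\ S p.1.1, T p.1.2 & U p.2]) /\
    e = \sum_(p <- l) p.1.1 * p.1.2 * p.2.

Definition comm_set (K : fieldType) (E : algType K) (S T : E -> Prop) (e : E) : Prop :=
  exists l : seq (E * E),
    (forall p, p \in l -> S p.1 /\ T p.2) /\
    e = \sum_(p <- l) ad p.1 p.2.

Definition subset_of (K : fieldType) (E : algType K) (S T : E -> Prop) : Prop :=
  forall x, S x -> T x.

Definition set_eq (K : fieldType) (E : algType K) (S T : E -> Prop) : Prop :=
  forall x, S x <-> T x.

(* Each ad_b is a derivation, so the N_i filter N_Delta(E) as an algebra:
   N_i N_j is contained in N_(i+j).  Hence N_0 (the centralizer of A') and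
   N_Delta(E) are subalgebras.  The elements of A' commute, so they lie in
   N_0, and the ideal a is stable under every ad_b with b in A'; applying
   such maps to a nonzero element of a, as long as some image is nonzero,
   ends at a nonzero element of a_0.  The ideal a' lies between a_0 and a,
   whence a' meets N_0 exactly in a_0.  For (2), if d is in N_1 and x in a_0,
   the Jacobi identity gives ad_b [d, x] = [ad_b d, x], which vanishes since
   ad_b d and x both lie in the commutative algebra N_0. *)

From HB Require Import structures.
From mathcomp Require Import all_boot all_order all_algebra.
From Stdlib Require Import Classical.
Set Implicit Arguments. Unset Strict Implicit. Unset Printing Implicit Defensive.
Import GRing.Theory.
Local Open Scope ring_scope.

Section Ad.
Variables (K : fieldType) (E : algType K).
Implicit Types (b d x y : E) (c : K).

Lemma ad0 b : ad b 0 = 0.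
Proof. by rewrite /ad mul0r mulr0 subrr. Qed.

Lemma ad1 b : ad b 1 = 0.
Proof. by rewrite /ad mulr1 mul1r subrr. Qed.

Lemma adD b x y : ad b (x + y) = ad b x + ad b y.
Proof. by rewrite /ad mulrDl mulrDr opprD addrACA. Qed.

Lemma adN b x : ad b (- x) = - ad b x.
Proof. by rewrite /ad mulrN mulNr opprK opprB addrC. Qed.

Lemma adZ b c x : ad b (c *: x) = c *: ad b x.
Proof. by rewrite /ad -scalerAr -scalerAl scalerBr. Qed.

Lemma adM b x y : ad b (x * y) = ad b x * y + x * ad b y.
Proof. by rewrite /ad mulrBl mulrBr !mulrA addrA subrK. Qed.

Lemma ad_ad b d x : ad b (ad d x) = ad (ad b d) x + ad d (ad b x).
Proof.
rewrite [ad d x]/ad adD adN !adM.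
set p := ad b d; set q := ad b x.
by rewrite /ad opprD [- _ - _]addrC addrACA.
Qed.

Lemma ad_eq0 b x : ad b x = 0 <-> x * b = b * x.
Proof.
rewrite /ad; split=> [/eqP | ->]; last exact: subrr.
by rewrite subr_eq0 => /eqP ->.
Qed.

End Ad.

Section NDelta.
Variables (K : fieldType) (E : algType K) (A' : E -> Prop).
Implicit Types (b d x y : E) (c : K).

Lemma NDelta0P x : NDelta_i A' 0 x <-> fixed_Delta A' x.
Proof.
split=> [N0x b Ab | Fx [|b [|? ?]] //= _ sA'].
  by apply: (N0x [:: b]) => // ?; rewrite inE => /eqP ->.
by apply: Fx; apply: sA'; rewrite inE eqxx.
Qed.

Lemma NDeltaSP i x :
  NDelta_i A' i.+1 x <-> forall b, A' b -> NDelta_i A' i (ad b x).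
Proof.
split=> [Nx b Ab s size_s sA' | Nx s].
  rewrite /iter_ad -foldr_rcons; apply: Nx; first by rewrite size_rcons size_s.
  by move=> ?; rewrite mem_rcons inE => /orP[/eqP -> | /sA'].
case/lastP: s => [|s b] // size_sb sbA'.
rewrite /iter_ad foldr_rcons; apply: Nx.
- by apply: sbA'; rewrite mem_rcons mem_head.
- by move: size_sb; rewrite size_rcons => -[].
- by move=> a sa; apply: sbA'; rewrite mem_rcons inE sa orbT.
Qed.

Lemma NDelta0_ad b x : NDelta_i A' 0 x -> A' b -> ad b x = 0.
Proof. by move/NDelta0P; apply. Qed.

Lemma NDeltaS_ad i b x : NDelta_i A' i.+1 x -> A' b -> NDelta_i A' i (ad b x).
Proof. by move/NDeltaSP; apply. Qed.

Lemma NDelta_i0 i : NDelta_i A' i 0.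
Proof.
elim: i => [|i IHi]; first by apply/NDelta0P => b _; rewrite ad0.
by apply/NDeltaSP => b _; rewrite ad0.
Qed.

Lemma NDelta_iD i x y :
  NDelta_i A' i x -> NDelta_i A' i y -> NDelta_i A' i (x + y).
Proof.
elim: i x y => [|i IHi] x y Nx Ny.
  by apply/NDelta0P => b Ab; rewrite adD !NDelta0_ad // addr0.
by apply/NDeltaSP => b Ab; rewrite adD; apply: IHi; apply: NDeltaS_ad.
Qed.

Lemma NDelta_iZ i c x : NDelta_i A' i x -> NDelta_i A' i (c *: x).
Proof.
elim: i x => [|i IHi] x Nx.
  by apply/NDelta0P => b Ab; rewrite adZ NDelta0_ad // scaler0.
by apply/NDeltaSP => b Ab; rewrite adZ; apply: IHi; apply: NDeltaS_ad.
Qed.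

Lemma NDelta_iS i x : NDelta_i A' i x -> NDelta_i A' i.+1 x.
Proof.
elim: i x => [|i IHi] x Nx; apply/NDeltaSP => b Ab.
  by rewrite NDelta0_ad //; apply: NDelta_i0.
by apply: IHi; apply: NDeltaS_ad.
Qed.

Lemma NDelta_i_le i j x : (i <= j)%N -> NDelta_i A' i x -> NDelta_i A' j x.
Proof.
move=> /subnK <- Nx; elim: (j - i)%N => // k IHk.
by rewrite addSn; apply: NDelta_iS.
Qed.

Lemma NDelta_iM i j x y :
  NDelta_i A' i x -> NDelta_i A' j y -> NDelta_i A' (i + j) (x * y).
Proof.
elim: i => [|i IHi] in j x y *; elim: j => [|j IHj] in x y * => Nx Ny.
- by apply/NDelta0P => b Ab; rewrite adM !NDelta0_ad // mul0r mulr0 addr0.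
- apply/NDeltaSP => b Ab; rewrite adM NDelta0_ad // mul0r add0r.
  by apply: IHj => //; apply: NDeltaS_ad.
- apply/NDeltaSP => b Ab; rewrite adM [ad b y]NDelta0_ad // mulr0 addr0.
  by apply: IHi => //; apply: NDeltaS_ad.
- rewrite addSn; apply/NDeltaSP => b Ab; rewrite adM.
  apply: NDelta_iD; first by apply: IHi => //; apply: NDeltaS_ad.
  by rewrite -addSnnS; apply: IHj => //; apply: NDeltaS_ad.
Qed.

Lemma NDelta0_subalgebra : is_subalgebra (NDelta_i A' 0).
Proof.
split; [exact: NDelta_i0 | | exact: NDelta_iD | exact: NDelta_iZ |].
  by apply/NDelta0P => b _; rewrite ad1.
by move=> x y; apply: (@NDelta_iM 0 0).
Qed.

Lemma NDelta_subalgebra : is_subalgebra (NDelta A').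
Proof.
split.
- by exists 0%N; apply: NDelta_i0.
- by exists 0%N; apply/NDelta0P => b _; rewrite ad1.
- move=> x y [i Nx] [j Ny]; exists (maxn i j).
  apply: NDelta_iD; [apply: NDelta_i_le _ Nx | apply: NDelta_i_le _ Ny].
    exact: leq_maxl.
  exact: leq_maxr.
- by move=> c x [i Nx]; exists i; apply: NDelta_iZ.
- by move=> x y [i Nx] [j Ny]; exists (i + j)%N; apply: NDelta_iM.
Qed.

Lemma fixed_Delta_centralizer : set_eq (fixed_Delta A') (centralizer A').
Proof. by move=> x; split=> Fx b Ab; apply/ad_eq0; apply: Fx. Qed.

Lemma nonzero_set_inter_NDelta0 (S : E -> Prop) :
  (forall b x, A' b -> S x -> S (ad b x)) -> subset_of S (NDelta A') ->
  nonzero_set S -> nonzero_set (set_inter S (NDelta_i A' 0)).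
Proof.
move=> S_ad SN [x [Sx x_neq0]]; have [i Nx] := SN x Sx.
elim: i x Sx x_neq0 Nx => [|i IHi] x Sx x_neq0 Nx; first by exists x.
have [[b [Ab bx_neq0]] | x_fixed] := classic (exists b, A' b /\ ad b x <> 0).
  by apply: (IHi (ad b x)) => //; [apply: S_ad | apply: NDeltaS_ad].
exists x; split=> //; split=> //; apply/NDelta0P => b Ab.
by apply: NNPP => bx_neq0; apply: x_fixed; exists b.
Qed.

Lemma NDelta1_ad_NDelta0 d x :
  is_commutative_on (NDelta_i A' 0) ->
  NDelta_i A' 1 d -> NDelta_i A' 0 x -> NDelta_i A' 0 (ad d x).
Proof.
move=> N0_comm Nd Nx; apply/NDelta0P => b Ab.
rewrite ad_ad [ad b x]NDelta0_ad // ad0 addr0; apply/ad_eq0.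
by apply: N0_comm => //; apply: NDeltaS_ad.
Qed.

End NDelta.

Section Ideals.
Variables (K : fieldType) (E : algType K) (S : E -> Prop).

Lemma ideal_ad (I : E -> Prop) b x : is_ideal_of S I -> S b -> I x -> I (ad b x).
Proof.
case=> _ _ ID IZ [IL IR] Sb Ix; rewrite /ad -scaleN1r.
by apply: ID; [apply: IL | apply: IZ; apply: IR].
Qed.

Lemma ideal_inter (I S0 : E -> Prop) :
  is_ideal_of S I -> is_subalgebra S0 -> subset_of S0 S ->
  is_ideal_of S0 (set_inter I S0).
Proof.
case=> _ I0 ID IZ [IL IR] [S00 _ S0D S0Z S0M] S0S; split.
- by move=> x [].
- by split.
- by move=> x y [Ix S0x] [Iy S0y]; split; [apply: ID | apply: S0D].
- by move=> c x [Ix S0x]; split; [apply: IZ | apply: S0Z].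
- split=> s x S0s [Ix S0x]; split;
    by [apply: IL => //; apply: S0S | apply: IR => //; apply: S0S | apply: S0M].
Qed.

Lemma prod_set3_ideal (T : E -> Prop) :
  is_subalgebra S -> subset_of T S -> is_ideal_of S (prod_set3 S T S).
Proof.
case=> S0 S1 SD SZ SM TS; split.
- move=> _ [l [Hl ->]]; rewrite big_seq.
  apply: big_ind => [//||p /Hl[Sp Tp Sp']]; first exact: SD.
  by apply: (SM) => //; apply: SM => //; apply: TS.
- by exists [::]; rewrite big_nil.
- move=> _ _ [l1 [Hl1 ->]] [l2 [Hl2 ->]]; exists (l1 ++ l2).
  by split; [move=> p; rewrite mem_cat => /orP[/Hl1 | /Hl2] | rewrite big_cat].
- move=> c _ [l [Hl ->]]; exists [seq (c *: p.1.1, p.1.2, p.2) | p <- l]; split.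
    by move=> _ /mapP[p /Hl[Sp Tp Sp'] ->]; split=> //; apply: SZ.
  by rewrite big_map scaler_sumr; apply: eq_bigr => p _; rewrite -!scalerAl.
split=> s _ Ss [l [Hl ->]].
  exists [seq (s * p.1.1, p.1.2, p.2) | p <- l]; split.
    by move=> _ /mapP[p /Hl[Sp Tp Sp'] ->]; split=> //; apply: SM.
  by rewrite big_map mulr_sumr; apply: eq_bigr => p _; rewrite !mulrA.
exists [seq (p.1.1, p.1.2, p.2 * s) | p <- l]; split.
  by move=> _ /mapP[p /Hl[Sp Tp Sp'] ->]; split=> //; apply: SM.
by rewrite big_map mulr_suml; apply: eq_bigr => p _; rewrite !mulrA.
Qed.

Lemma prod_set3_sub_ideal (I T : E -> Prop) :
  is_ideal_of S I -> subset_of T I -> subset_of (prod_set3 S T S) I.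
Proof.
case=> _ I0 ID _ [IL IR] TI _ [l [Hl ->]].
rewrite big_seq; apply: big_ind => [//||p /Hl[Sp Tp Sp']]; first exact: ID.
by apply: IR => //; apply: IL => //; apply: TI.
Qed.

Lemma prod_set3_id (T : E -> Prop) x : S 1 -> T x -> prod_set3 S T S x.
Proof.
move=> S1 Tx; exists [:: (1, x, 1)].
by split; [move=> p; rewrite inE => /eqP -> | rewrite big_seq1 /= mul1r mulr1].
Qed.

Lemma comm_set_sub_ideal (I U V : E -> Prop) :
  is_ideal_of S I -> (forall u v, U u -> V v -> I (ad u v)) ->
  subset_of (comm_set U V) I.
Proof.
case=> _ I0 ID _ _ UV_I _ [l [Hl ->]].
rewrite big_seq; apply: big_ind => [//||p /Hl[Up Vp]]; first exact: ID.
exact: UV_I.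
Qed.

End Ideals.

Unset Implicit Arguments.

Theorem theorem1p7 (K : fieldType) (E : algType K) (A A' a : E -> Prop) :
  is_subalgebra A -> is_commutative_on A ->
  (forall x, A' x -> A x) -> (exists x, A' x) ->
  is_ideal_of (NDelta A') a -> nonzero_set a ->
  let N := NDelta A' in
  let N0 := NDelta_i A' 0 in
  let a0 := set_inter a N0 in
  (* (1) *)
  ([/\ set_eq N0 (fixed_Delta A'), set_eq (fixed_Delta A') (centralizer A'),
       is_ideal_of N0 a0 /\ nonzero_set a0 &
       let a' := prod_set3 N a0 N in
       [/\ is_ideal_of N a', nonzero_set a' & set_eq (set_inter a' N0) a0]]
  /\
  (* (2) *)
  (is_commutative_on N0 ->
     subset_of (comm_set (NDelta_i A' 1) a0) a0)).
Proof.
move=> _ A_comm A'A _ a_ideal a_nz N N0 a0.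
have A'_N0 : subset_of A' N0.
  move=> b Ab; apply/NDelta0P => c Ac; apply/ad_eq0.
  by apply: A_comm; apply: A'A.
have N0_N : subset_of N0 N by move=> x N0x; exists 0%N.
have a_N : subset_of a N by case: a_ideal.
have [_ N1 _ _ _] := NDelta_subalgebra A'.
have a0_ideal : is_ideal_of N0 a0.
  exact: ideal_inter a_ideal (NDelta0_subalgebra A') N0_N.
have a0_nz : nonzero_set a0.
  apply: nonzero_set_inter_NDelta0 a_N a_nz => b x Ab.
  by apply: ideal_ad a_ideal _; apply/N0_N/A'_N0.
have a'_a := prod_set3_sub_ideal a_ideal (fun x (a0x : a0 x) => a0x.1).
have a0_a' x : a0 x -> prod_set3 N a0 N x by apply: prod_set3_id.
split.
  split; [exact: NDelta0P | exact: fixed_Delta_centralizer | by [] |].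
  split; first by apply: prod_set3_ideal (NDelta_subalgebra A') _ => x [/a_N].
    by case: a0_nz => x [a0x x_neq0]; exists x; split; first exact: a0_a'.
  by move=> x; split=> [[/a'_a ax N0x] // | a0x]; split; [apply: a0_a' | case: a0x].
move=> N0_comm; apply: comm_set_sub_ideal a0_ideal _ => d x Nd [ax N0x]; split.
  by apply: ideal_ad a_ideal _ ax; exists 1%N.
exact: NDelta1_ad_NDelta0.
Qed.
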